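(* Let $G$ be a mixed signed, directed graph on vertices $\{1,\dots,n\}$ and suppose $v^*\in(\mathbb{R}^n)^*$ satisfies $\langle v^*,x\rangle=0$ for all $x\in\mathcal{P}_G$. Let $\widetilde{G}_1,\dots,\widetilde{G}_r$ be the bipartite components of the augmented signed graph $\widetilde G$, with bipartitions $V(\widetilde{G}_s)=\widetilde L_s\cup\widetilde R_s$. Then $v^*$ is a linear combination of $e^*_{\pi(\widetilde L_1)}-e^*_{\pi(\widetilde R_1)},\dots,e^*_{\pi(\widetilde L_r)}-e^*_{\pi(\widetilde R_r)}$.
   Context: A mixed signed, directed graph $G$ on vertex set $\{1,\dots,n\}$ has a set of signed edges $+ij$ or $-ij$ (loops $\pm ii$ allowed) and directed edges $(i,j)$ with $i\ne j$; between a pair of vertices any subset of $+ij,-ij,(i,j),(j,i)$ may occur. Define $\rho(\pm ij)=\pm(e_i+e_j)$ (so $\rho(\pm ii)=\pm2e_i$) and $\rho((i,j))=e_j-e_i$ in $\mathbb{R}^n$; $\mathcal{P}_G=\mathrm{conv}(\rho(E(G)))$. The augmented signed graph $\widetilde G$ is the signed graph obtained by replacing each directed edge $(i,j)$ by a new (artificial) vertex $t_{(i,j)}$ and the two edges $-i\,t_{(i,j)}$ and $+t_{(i,j)}\,j$. For a set $S$ of vertices of $\widetilde G$, $\pi(S)=S\cap\{1,\dots,n\}$ (the non-artificial vertices of $S$). A component of a signed graph is a maximal connected subgraph (isolated vertices are components); it is bipartite if its vertex set can be partitioned into $L,R$ (one possibly empty) such that every edge has exactly one endpoint in each (a component with a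 loop is not bipartite). For $S\subseteq\{1,\dots,n\}$, $e_S^*=\sum_{i\in S}e_i^*$ in the dual basis. *)

From HB Require Import structures.
From mathcomp Require Import all_boot all_order all_algebra.
Set Implicit Arguments. Unset Strict Implicit. Unset Printing Implicit Defensive.
Import Order.TTheory GRing.Theory Num.Theory.
Local Open Scope ring_scope.

(* A mixed signed, directed graph on {1..n} (here 'I_n) is given by
   - S : {set bool * 'I_n * 'I_n}: signed edges; (true,i,j) is +ij, (false,i,j)
     is -ij (the pair is unordered: (b,i,j) and (b,j,i) denote the same edge;
     i = j gives a loop);
   - D : {set 'I_n * 'I_n}: directed edges (i,j), with i <> j. *)

Definition evec (R : nzRingType) n (i : 'I_n) : 'rV[R]_n := \row_k (k == i)%:R.

Definition rho_signed (R : nzRingType) n (e : bool * 'I_n * 'I_n) : 'rV[R]_n :=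
  (if e.1.1 then 1 else -1) *: (evec R e.1.2 + evec R e.2).

Definition rho_directed (R : nzRingType) n (d : 'I_n * 'I_n) : 'rV[R]_n :=
  evec R d.2 - evec R d.1.

Definition rho_image (R : nzRingType) n (S : {set bool * 'I_n * 'I_n})
  (D : {set 'I_n * 'I_n}) (x : 'rV[R]_n) : Prop :=
  (exists2 e, e \in S & x = rho_signed R e) \/
  (exists2 d, d \in D & x = rho_directed R d).

Definition in_conv (R : numDomainType) n (P : 'rV[R]_n -> Prop) (x : 'rV[R]_n) : Prop :=
  exists (m : nat) (p : 'I_m -> 'rV[R]_n) (w : 'I_m -> R),
    [/\ forall k, P (p k), forall k, 0 <= w k, \sum_k w k = 1 &
        x = \sum_k w k *: p k].

Definition polytope (R : numDomainType) n (S : {set bool * 'I_n * 'I_n})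
  (D : {set 'I_n * 'I_n}) : 'rV[R]_n -> Prop :=
  in_conv (rho_image S D).

(* pairing <v*, x> of a dual vector (given by coordinates in the dual basis)
   with a vector *)
Definition pairing (R : nzRingType) n (v x : 'rV[R]_n) : R := \sum_i v 0 i * x 0 i.

Definition dual_ind (R : nzRingType) n (T : {set 'I_n}) : 'rV[R]_n :=
  \row_i (i \in T)%:R.

(* vertices of the augmented graph: original vertices inl i, and one
   artificial vertex inr d = t_d for each directed edge d in D *)
Definition aug_vertex n (D : {set 'I_n * 'I_n}) : finType :=
  ('I_n + {d : 'I_n * 'I_n | d \in D})%type.

Definition aug_edges n (S : {set bool * 'I_n * 'I_n}) (D : {set 'I_n * 'I_n})
  : {set bool * aug_vertex D * aug_vertex D} :=
  [set x : bool * aug_vertex D * aug_vertex D |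
     [|| [exists e in S, x == (e.1.1, inl e.1.2, inl e.2)],
         [exists d : {d : 'I_n * 'I_n | d \in D}, x == (false, inl (val d).1, inr d)]
       | [exists d : {d : 'I_n * 'I_n | d \in D}, x == (true, inr d, inl (val d).2)]]].

Arguments aug_edges {n} S D.

Definition aug_adj n (S : {set bool * 'I_n * 'I_n}) (D : {set 'I_n * 'I_n})
  : rel (aug_vertex D) :=
  fun u w => [exists b, ((b, u, w) \in aug_edges S D) || ((b, w, u) \in aug_edges S D)].

Arguments aug_adj {n} S D.

Definition is_aug_component n (S : {set bool * 'I_n * 'I_n}) (D : {set 'I_n * 'I_n})
  (C : {set aug_vertex D}) : Prop :=
  exists u, C = [set w | connect (aug_adj S D) u w].

Arguments is_aug_component {n} S D C.

Definition is_bipartition n (S : {set bool * 'I_n * 'I_n}) (D : {set 'I_n * 'I_n})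
  (C L R : {set aug_vertex D}) : Prop :=
  [/\ L :|: R = C, [disjoint L & R] &
      forall u w, aug_adj S D u w -> u \in C ->
        ((u \in L) && (w \in R)) || ((u \in R) && (w \in L))].

Arguments is_bipartition {n} S D C L R.

Definition is_bipartite_component n (S : {set bool * 'I_n * 'I_n})
  (D : {set 'I_n * 'I_n}) (C : {set aug_vertex D}) : Prop :=
  is_aug_component S D C /\ exists L R, is_bipartition S D C L R.

Arguments is_bipartite_component {n} S D C.

Definition proj_orig n (D : {set 'I_n * 'I_n}) (T : {set aug_vertex D}) : {set 'I_n} :=
  [set i : 'I_n | (inl i : aug_vertex D) \in T].

From HB Require Import structures.
From mathcomp Require Import all_boot all_order all_algebra.
Set Implicit Arguments. Unset Strict Implicit. Unset Printing Implicit Defensive.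
Import Order.TTheory GRing.Theory Num.Theory.
Local Open Scope ring_scope.

(* Put w(i) := v_i on original vertices and w(t_(i,j)) := -v_i on artificial
   ones. Since v vanishes on rho(E(G)), w(x) + w(y) = 0 along every edge of the
   augmented graph: for +-ij this is v_i + v_j = 0, for -i t_(i,j) it holds by
   construction, and for +t_(i,j) j it is v_j - v_i = 0. Hence w changes sign
   along edges. On a bipartite component it is therefore c_s on L_s and -c_s on
   R_s; on any other component it vanishes, since otherwise the level sets
   {w = a} and {w = -a} of a nonzero value a would bipartition it. Reading off
   coordinate i gives v = sum_s c_s (e*_pi(L_s) - e*_pi(R_s)). *)

Lemma connect_propagate (T : finType) (e : rel T) (P : T -> Prop) x y :
  (forall z t, connect e x z -> e z t -> P z -> P t) ->
  P x -> connect e x y -> P y.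
Proof.
move=> step Px /connectP [p xp ->] {y}.
elim/last_ind: p xp => [//|p z IH]; rewrite rcons_path last_rcons => /andP [xp ez].
exact: step (path_connect xp (mem_last x p)) ez (IH xp).
Qed.

(* [is_bipartition S D] unfolds to [bipartition (aug_adj S D)]. *)
Definition bipartition (T : finType) (e : rel T) (C L R : {set T}) : Prop :=
  [/\ L :|: R = C, [disjoint L & R] &
      forall u w, e u w -> u \in C ->
        ((u \in L) && (w \in R)) || ((u \in R) && (w \in L))].

Section SignAlternatingWeight.
Variables (T : finType) (e : rel T) (K : numDomainType) (w : T -> K).
Hypothesis w_edge : forall x y, e x y -> w y = - w x.

Lemma connect_weight x y : connect e x y -> w y = w x \/ w y = - w x.
Proof.
apply: (connect_propagate (P := fun y => w y = w x \/ w y = - w x)); last by left.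
by move=> z t _ /w_edge -> [] ->; rewrite ?opprK; [right | left].
Qed.

Lemma bipartition_weight u (L R : {set T}) :
  bipartition e [set y | connect e u y] L R ->
  exists c, {in L, forall x, w x = c} /\ {in R, forall x, w x = - c}.
Proof.
case=> LR_C dis_LR bip.
pose signed x := if x \in L then w x else - w x.
have notLR x : x \in R -> x \notin L by move=> xR; rewrite (disjointFl dis_LR xR).
have signed_const x : connect e u x -> signed x = signed u.
  apply: (connect_propagate (P := fun y => signed y = signed u)) => // z t uz zt <-.
  rewrite /signed (w_edge zt).
  have zC : z \in [set y | connect e u y] by rewrite inE.
  have /orP [/andP [zL tR] | /andP [zR tL]] := bip z t zt zC.
    by rewrite zL (negPf (notLR t tR)) opprK.
  by rewrite tL (negPf (notLR z zR)).
have xC x : x \in L :|: R -> connect e u x by rewrite LR_C inE.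
exists (signed u); split=> x xLR.
  by rewrite -(signed_const x) ?xC ?inE ?xLR // /signed xLR.
by rewrite -(signed_const x) ?xC ?inE ?xLR ?orbT // /signed (negPf (notLR x xLR)) opprK.
Qed.

Lemma weight_level_bipartition x : w x != 0 ->
  let C := [set y | connect e x y] in
  bipartition e C [set y in C | w y == w x] [set y in C | w y == - w x].
Proof.
move=> wx0 C; split.
- apply/setP => y; rewrite !inE -andb_orr andb_idr // => /connect_weight.
  by case=> ->; rewrite eqxx ?orbT.
- apply/pred0P => y /=; rewrite !inE.
  apply/negP => /andP [/andP [_ /eqP ->] /andP [_]].
  by rewrite eq_sym eqNr (negPf wx0).
- move=> y z yz; rewrite !inE => xy.
  rewrite xy (connect_trans xy (connect1 yz)) (w_edge yz) /=.
  by case: (connect_weight xy) => ->; rewrite ?opprK !eqxx ?orbT.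
Qed.

Lemma bipartition_coord C (L R : {set T}) c x :
  bipartition e C L R ->
  {in L, forall y, w y = c} -> {in R, forall y, w y = - c} ->
  c * ((x \in L)%:R - (x \in R)%:R) = if x \in C then w x else 0.
Proof.
case=> <- dis_LR _ wL wR; rewrite inE.
have [xL | xNL] /= := boolP (x \in L).
  by rewrite (disjointFr dis_LR xL) subr0 mulr1 wL.
by case: (boolP (x \in R)) => xR; rewrite ?sub0r ?mulrN ?mulr1 ?wR ?mulr0 ?oppr0.
Qed.

End SignAlternatingWeight.

Lemma component_of_connect (T : finType) (e : rel T) u x :
  connect_sym e -> connect e u x ->
  [set y | connect e u y] = [set y | connect e x y].
Proof. by move=> e_sym ux; apply/setP => y; rewrite !inE (same_connect e_sym ux). Qed.

Section Pairing.
Variables (K : comNzRingType) (n : nat).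

Lemma pairingD (v x y : 'rV[K]_n) : pairing v (x + y) = pairing v x + pairing v y.
Proof. by rewrite /pairing -big_split; apply: eq_bigr => k _; rewrite mxE mulrDr. Qed.

Lemma pairingN (v x : 'rV[K]_n) : pairing v (- x) = - pairing v x.
Proof. by rewrite /pairing -sumrN; apply: eq_bigr => k _; rewrite mxE mulrN. Qed.

Lemma pairingZ (v x : 'rV[K]_n) a : pairing v (a *: x) = a * pairing v x.
Proof. by rewrite /pairing mulr_sumr; apply: eq_bigr => k _; rewrite mxE mulrCA. Qed.

Lemma pairing_evec (v : 'rV[K]_n) i : pairing v (evec K i) = v 0 i.
Proof.
rewrite /pairing (bigD1 i) //= mxE eqxx mulr1 big1 ?addr0 // => k /negPf ki.
by rewrite mxE ki mulr0.
Qed.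

End Pairing.

Section AugmentedGraph.
Variables (K : numDomainType) (n : nat).
Variables (S : {set bool * 'I_n * 'I_n}) (D : {set 'I_n * 'I_n}).

Lemma rho_image_polytope (x : 'rV[K]_n) : rho_image S D x -> polytope S D x.
Proof.
move=> hx; exists 1%N, (fun _ => x), (fun _ => 1).
by split=> //; rewrite big_ord1 ?scale1r.
Qed.

Lemma aug_adj_sym : symmetric (aug_adj S D).
Proof. by move=> x y; apply/existsP/existsP => [] [b hb]; exists b; rewrite orbC. Qed.

Variable v : 'rV[K]_n.
Hypothesis v_rho : forall x, rho_image S D x -> pairing v x = 0.

Definition aug_weight (x : aug_vertex D) : K :=
  match x with inl i => v 0 i | inr d => - v 0 (val d).1 end.

Lemma aug_weight_edge b x y :
  (b, x, y) \in aug_edges S D -> aug_weight x + aug_weight y = 0.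
Proof.
rewrite inE => /or3P [/existsP [f /andP [fS /eqP [_ -> ->]]]
                     | /existsP [d /eqP [_ -> ->]] | /existsP [d /eqP [_ -> ->]]] /=.
- have /eqP := v_rho (or_introl (ex_intro2 _ _ f fS erefl)).
  rewrite /rho_signed pairingZ pairingD !pairing_evec.
  by case: f.1.1; rewrite ?mul1r ?mulN1r ?oppr_eq0 => /eqP.
- exact: subrr.
- have := v_rho (or_intror (ex_intro2 _ _ (val d) (valP d) erefl)).
  by rewrite /rho_directed pairingD pairingN !pairing_evec addrC.
Qed.

Lemma aug_weight_adj x y : aug_adj S D x y -> aug_weight y = - aug_weight x.
Proof.
move=> /existsP [b /orP [] /aug_weight_edge wxy]; apply/eqP.
  by rewrite -addr_eq0 addrC wxy.
by rewrite -addr_eq0 wxy.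
Qed.

End AugmentedGraph.

Theorem mainTheorem8 (R : realFieldType) (n : nat)
  (S : {set bool * 'I_n * 'I_n}) (D : {set 'I_n * 'I_n})
  (hD : forall d, d \in D -> d.1 != d.2)
  (v : 'rV[R]_n)
  (hv : forall x, polytope S D x -> pairing v x = 0)
  (r : nat) (C L Rt : 'I_r -> {set aug_vertex D})
  (hCinj : injective C)
  (hCbip : forall s, is_bipartite_component S D (C s))
  (hCall : forall C', is_bipartite_component S D C' -> exists s, C' = C s)
  (hLR : forall s, is_bipartition S D (C s) (L s) (Rt s)) :
  exists c : 'I_r -> R,
    v = \sum_(s < r) c s *: (dual_ind R (proj_orig (L s)) - dual_ind R (proj_orig (Rt s))).
Proof.
have v_rho x : rho_image S D x -> pairing v x = 0 by move/rho_image_polytope/hv.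
have w_edge := aug_weight_adj v_rho.
set w := aug_weight v in w_edge.
have /fin_all_exists [c hc] : forall s, exists c : R,
    {in L s, forall x, w x = c} /\ {in Rt s, forall x, w x = - c}.
  move=> s; have [[u Cs] _] := hCbip s.
  by apply: (bipartition_weight w_edge (u := u)); rewrite -Cs; exact: hLR.
exists c; apply/rowP => i; rewrite summxE.
set x : aug_vertex D := inl i; rewrite -[v 0 i]/(w x).
under eq_bigr do rewrite !mxE !inE (bipartition_coord x (hLR _) (hc _).1 (hc _).2).
rewrite -big_mkcond.
have [wx0 | wx0] := eqVneq (w x) 0; first by rewrite wx0 big1.
have [s0 Cs0] : exists s, [set y | connect (aug_adj S D) x y] = C s.
  apply: hCall; split; first by exists x.
  by do 2 eexists; exact: weight_level_bipartition w_edge x wx0.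
rewrite (big_pred1 s0) // => s /=.
apply/idP/eqP => [xCs | ->]; last by rewrite -Cs0 inE connect0.
have [[u Cs] _] := hCbip s; move: xCs; rewrite Cs inE => ux.
apply: hCinj; rewrite -Cs0 Cs.
exact: component_of_connect (sym_connect_sym (@aug_adj_sym _ S D)) ux.
Qed.
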